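(* Let $G$ be a finite group and let $V$ be an abelian normal $2$-subgroup of $G$ such that $C_G(V)\leq V$. Let $\alpha$ be an automorphism of $G$ such that $[V,\alpha]=1$ and $\alpha^2\in\mathrm{Inn}(G)$. Then $[G,\alpha] \leq V$, and if $G$ acts fixed point freely on $V/\Phi(V)$, then the order of $\alpha$ is at most the exponent of $V$.
   Context: $\mathrm{Inn}(G)$ denotes the group of inner automorphisms of $G$. *)

From mathcomp Require Import all_boot all_fingroup all_solvable.
Set Implicit Arguments. Unset Strict Implicit. Unset Printing Implicit Defensive.
Local Open Scope group_scope.

Definition inner_aut_of (gT : finGroupType) (G : {set gT}) (a : {perm gT}) :=
  exists2 x, x \in G & forall g, g \in G -> a g = g ^ x.

From mathcomp Require Import all_boot all_fingroup all_solvable.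
Local Open Scope group_scope.

(* Since a fixes V pointwise, v ^ (a g) = a (v ^ g) = v ^ g for g in G, so the
   commutator g^-1 * a g centralizes V and hence lies in V.  As a fixes these
   commutators, a^n maps g to g * (g^-1 * a g)^n, so a^(exponent V) = 1. *)

Section AutFixingNormalSubgroup.

Variables (gT : finGroupType) (G V : {group gT}) (a : {perm gT}).
Hypotheses (autA : a \in Aut G) (fixV : {in V, forall v, a v = v}).

Lemma Aut_fix_conj g v :
  V \subset G -> g \in G -> v \in V -> v ^ g \in V -> v ^ a g = v ^ g.
Proof.
move=> sVG Gg Vv Vvg; rewrite -[RHS]fixV // -[v in LHS]fixV //.
by rewrite -!(autmE autA) morphJ // (subsetP sVG).
Qed.

Lemma Aut_comm_cent g : V <| G -> g \in G -> g^-1 * a g \in 'C(V).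
Proof.
move=> /andP[sVG nVG] Gg; apply/centP=> v Vv.
have Vvg : v ^ g^-1 \in V by rewrite memJ_norm // (subsetP nVG) ?groupV.
apply/commute_sym/commgP/conjg_fixP.
by rewrite conjgM Aut_fix_conj ?conjgKV.
Qed.

Lemma Aut_comm_sub g : V <| G -> 'C_G(V) \subset V -> g \in G -> g^-1 * a g \in V.
Proof.
move=> nsVG sCV Gg; apply: (subsetP sCV); rewrite inE Aut_comm_cent // andbT.
by rewrite groupM ?groupV ?(Aut_closed autA).
Qed.

Lemma Aut_expgE y n :
  V \subset G -> y \in G -> y^-1 * a y \in V -> (a ^+ n) y = y * (y^-1 * a y) ^+ n.
Proof.
move=> sVG Gy Vd; elim: n => [|n IHn]; first by rewrite perm1 mulg1.
have Gdn : (y^-1 * a y) ^+ n \in G by rewrite (subsetP sVG) ?groupX.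
rewrite expgSr permM IHn -(autmE autA) morphM //= autmE (fixV _ (groupX n Vd)).
by rewrite expgS mulgA mulKVg.
Qed.

Lemma order_Aut_dvdn_exponent :
  V \subset G -> {in G, forall g, g^-1 * a g \in V} -> #[a] %| exponent V.
Proof.
move=> sVG commV; rewrite order_dvdn; apply/eqP/permP=> y; rewrite perm1.
case Gy: (y \in G); last by rewrite (out_Aut (groupX _ autA)) ?Gy.
by rewrite Aut_expgE ?commV // expg_exponent ?commV ?mulg1.
Qed.

End AutFixingNormalSubgroup.

Theorem lemma3p4 (gT : finGroupType) (G V : {group gT}) (a : {perm gT}) :
  V <| G -> abelian V -> 2.-group V -> 'C_G(V) \subset V ->
  a \in Aut G ->
  (forall v, v \in V -> a v = v) ->
  inner_aut_of G (a ^+ 2) ->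
  (forall g, g \in G -> g^-1 * a g \in V) /\
  ('C_(V / 'Phi(V))(G / 'Phi(V)) = 1 -> (#[a] <= exponent V)%N).
Proof.
move=> nsVG _ _ sCV autA fixV _.
have commV g : g \in G -> g^-1 * a g \in V by apply: Aut_comm_sub.
split=> // _; apply: dvdn_leq; first exact: exponent_gt0.
exact: order_Aut_dvdn_exponent (normal_sub nsVG) commV.
Qed.
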